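(* Assume $\rho_1=1$ and $\rho_{1,2}=\lambda^2\int_0^\infty x^2\,dB_1(x)<\infty$. Then for every fixed integer $j\ge0$, $$e_{L-j}-e_{L-j-1}=\frac{2}{\rho_{1,2}}+o(1)\qquad\text{as }L\to\infty.$$
   Context: $B_1$ is a probability distribution function on $[0,\infty)$ with positive finite mean, $\lambda>0$, $\rho_1=\lambda\int_0^\infty x\,dB_1(x)$. Let $r_j=\int_0^\infty e^{-\lambda x}\frac{(\lambda x)^j}{j!}\,dB_1(x)$, $j\ge0$, and define $(e_n)_{n\ge0}$ by $e_0=1$ and $e_n=\sum_{j=0}^n e_{n-j+1}r_j$ for $n\ge0$ ($e_n$ is the expected number of customers served during a busy period of the M/GI/1/$n$ queue with arrival rate $\lambda$ and service distribution $B_1$). *)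

(* B_1 is a probability measure P on the Borel sets of R
   concentrated on [0, +oo). Integrals "dB_1(x)" are \int[P]_x. *)
From HB Require Import structures.
From mathcomp Require Import all_boot all_order all_algebra.
From mathcomp Require Import all_classical all_reals all_analysis.
Set Implicit Arguments. Unset Strict Implicit. Unset Printing Implicit Defensive.
Import Order.TTheory GRing.Theory Num.Theory.
Import numFieldNormedType.Exports.
Local Open Scope ring_scope.

Definition r_coef (R : realType) (P : probability R R) (lam : R) (j : nat) : R :=
  fine (\int[P]_x (expR (- (lam * x)) * (lam * x) ^+ j / (j`!)%:R)%:E)%E.

Definition rho1 (R : realType) (P : probability R R) (lam : R) : \bar R :=
  (lam%:E * \int[P]_x x%:E)%E.

Definition rho12 (R : realType) (P : probability R R) (lam : R) : \bar R :=
  ((lam ^+ 2)%:E * \int[P]_x (x ^+ 2)%:E)%E.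

(* The defining relations of (e_n): e_0 = 1 and
   e_n = \sum_{j=0}^n e_{n-j+1} r_j for all n >= 0.  These determine e uniquely
   since r_0 > 0. *)
Definition is_e_seq (R : realType) (r : nat -> R) (e : nat -> R) : Prop :=
  e 0%N = 1 /\ forall n : nat, e n = \sum_(0 <= j < n.+1) e (n - j).+1 * r j.

(* The increments d n = e n - e (n - 1) solve the renewal equation
   d = r + a * d, where a k = r (k + 1) + r (k + 2) + ... is the tail of the
   mixed-Poisson law r.  Mixing the Poisson identities sum_l p_l = 1,
   sum_l l p_l = y and sum_l C(l, 2) p_l = y^2 / 2 over y = lam x gives
   sum r = 1, sum_l l r_l = rho_1 = 1 and sum_l C(l, 2) r_l = rho_{1,2} / 2;
   summing by parts, a is a probability law whose tails T sum to
   m = rho_{1,2} / 2.  Because a 1 > 0, the Erdos-Feller-Pollard argument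
   applies: the bounded sequence d stays near its limsup (and near its liminf)
   along arbitrarily long runs, and the identity sum_k T k * d (n - k) =
   r 0 + ... + r n then forces limsup d * m <= 1 <= liminf d * m, so
   d n --> 1 / m = 2 / rho_{1,2}. *)

From HB Require Import structures.
From mathcomp Require Import all_boot all_order all_algebra.
From mathcomp Require Import all_classical all_reals all_analysis.
From mathcomp Require Import ring lra zify measurable_realfun.
Set Implicit Arguments.
Unset Strict Implicit.
Unset Printing Implicit Defensive.
Import Order.TTheory GRing.Theory Num.Theory.
Import numFieldNormedType.Exports.
Local Open Scope classical_set_scope.
Local Open Scope ring_scope.

Section SequenceAlgebra.
Variable R : realType.
Implicit Types x y : nat -> R.

Definition psum x n := \sum_(i < n.+1) x i.
Definition seqconv x y n := \sum_(i < n.+1) x i * y (n - i)%N.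
Definition kdelta (i : nat) : R := (i == 0%N)%:R.
(* [tail x n = x (n + 1) + x (n + 2) + ...] when [x] sums to [1]. *)
Definition tail x n := 1 - psum x n.
Definition incr x n := x n - (if n is k.+1 then x k else 0).

Lemma psum0 x : psum x 0 = x 0.
Proof. by rewrite /psum big_ord1. Qed.

Lemma psumS x n : psum x n.+1 = psum x n + x n.+1.
Proof. by rewrite /psum big_ord_recr. Qed.

Lemma psumB x y n : psum (fun i => x i - y i) n = psum x n - psum y n.
Proof. by rewrite /psum sumrB. Qed.

Lemma psum_kdelta n : psum kdelta n = 1.
Proof. by rewrite /psum big_ord_recl big1 ?addr0. Qed.

Lemma psum_incr x n : psum (incr x) n = x n.
Proof.
elim: n => [|n IH]; first by rewrite psum0 /incr subr0.
by rewrite psumS IH /incr addrC subrK.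
Qed.

Lemma psum_inj x y : (forall n, psum x n = psum y n) -> forall n, x n = y n.
Proof.
move=> eq_xy [|n]; first by have := eq_xy 0%N; rewrite !psum0.
by have := eq_xy n.+1; rewrite !psumS eq_xy; apply: addrI.
Qed.

Lemma tail_psum x n : tail x n = psum (fun i => kdelta i - x i) n.
Proof. by rewrite psumB psum_kdelta. Qed.

Lemma tailS x n : tail x n.+1 = tail x n - x n.+1.
Proof. by rewrite /tail psumS opprD addrA. Qed.

Lemma seqconvC x y n : seqconv x y n = seqconv y x n.
Proof.
rewrite /seqconv (reindex_inj rev_ord_inj) /=; apply: eq_bigr => i _.
by rewrite subSS subKn 1?mulrC // -ltnS ltn_ord.
Qed.

Lemma seqconvBl x x' y n :
  seqconv (fun i => x i - x' i) y n = seqconv x y n - seqconv x' y n.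
Proof. by rewrite /seqconv -sumrB; apply: eq_bigr => i _; rewrite mulrBl. Qed.

Lemma seqconv_kdelta y n : seqconv kdelta y n = y n.
Proof.
rewrite /seqconv big_ord_recl /= subn0 mul1r big1 ?addr0 // => i _.
by rewrite /kdelta mul0r.
Qed.

Lemma seqconv_psumr x y n : seqconv x (psum y) n = psum (seqconv x y) n.
Proof.
elim: n => [|n IH]; first by rewrite /seqconv /psum !big_ord1.
rewrite psumS -IH /seqconv (big_ord_recr n.+1) (big_ord_recr n.+1) /= !subnn psum0.
rewrite addrA; congr (_ + _).
rewrite -big_split /=; apply: eq_bigr => i _.
by rewrite subSn ?psumS ?mulrDr // -ltnS ltn_ord.
Qed.

Lemma seqconv_psuml x y n : seqconv (psum x) y n = psum (seqconv x y) n.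
Proof.
rewrite seqconvC seqconv_psumr /psum; apply: eq_bigr => i _; exact: seqconvC.
Qed.

Lemma seqconv_tail x y n :
  seqconv (tail x) y n = psum (seqconv (fun i => kdelta i - x i) y) n.
Proof.
rewrite -seqconv_psuml /seqconv; apply: eq_bigr => i _; by rewrite tail_psum.
Qed.

End SequenceAlgebra.
Arguments kdelta {R} i.

Section ESequence.
Variables (R : realType) (r e : nat -> R).
Hypothesis he : is_e_seq r e.

Lemma seqconv_e_seq n : seqconv (fun i => kdelta i - r i) e n = incr e n - r n.
Proof.
case: he => e0 eS; rewrite seqconvBl seqconv_kdelta.
case: n => [|n]; first by rewrite /seqconv /incr big_ord1 subnn e0 subr0 mulr1.
rewrite /seqconv /incr big_ord_recr /= subnn e0 mulr1 (eS n) big_mkord.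
have -> : \sum_(i < n.+1) r i * e (n.+1 - i)%N = \sum_(i < n.+1) e (n - i).+1 * r i.
  by apply: eq_bigr => i _; rewrite mulrC subSn // -ltnS ltn_ord.
lra.
Qed.

Lemma renewal_eq_incr n :
  seqconv (fun i => kdelta i - tail r i) (incr e) n = r n.
Proof.
move: n; apply: psum_inj => n.
rewrite -seqconv_psumr.
have -> : seqconv (fun i => kdelta i - tail r i) (psum (incr e)) n =
          seqconv (fun i => kdelta i - tail r i) e n.
  by apply: eq_bigr => i _; rewrite psum_incr.
rewrite seqconvBl seqconv_kdelta seqconv_tail.
have -> : psum (seqconv (fun i => kdelta i - r i) e) n = psum (fun i => incr e i - r i) n.
  by apply: eq_bigr => i _; rewrite seqconv_e_seq.
by rewrite psumB psum_incr opprB addrC subrK.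
Qed.

End ESequence.

Section PartialSums.
Variable R : realType.
Implicit Types x : nat -> R.

Lemma le_psum_addn x : (forall i, 0 <= x i) -> forall n k, psum x n <= psum x (n + k)%N.
Proof.
move=> x_ge0 n; elim=> [|k IH]; first by rewrite addn0.
by rewrite addnS psumS (le_trans IH) // lerDl.
Qed.

Lemma psum_le_lim x (s : R) : (forall i, 0 <= x i) -> psum x @ \oo --> s ->
  forall n, psum x n <= s.
Proof.
move=> x_ge0 cvx n; apply: (ler_cvg_to (cvg_cst (psum x n)) cvx).
near=> k; have nk : (n <= k)%N by near: k; exists n.
by rewrite -(subnKC nk) le_psum_addn.
Unshelve. all: by end_near. Qed.

Lemma tail_ge0 x : (forall i, 0 <= x i) -> psum x @ \oo --> (1 : R) ->
  forall n, 0 <= tail x n.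
Proof. by move=> x_ge0 cvx n; rewrite subr_ge0 psum_le_lim. Qed.

Lemma cvg_psum_shift x (s : R) n : psum x @ \oo --> s ->
  (fun k => psum x (n + k)%N) @ \oo --> s.
Proof.
rewrite -(cvg_shiftn n); apply: cvg_trans.
by apply: near_eq_cvg; near=> k; rewrite addnC.
Unshelve. all: by end_near. Qed.

Lemma cvg_eventually_ge (u : nat -> R) (l eps : R) : u @ \oo --> l -> 0 < eps ->
  exists N, forall n, (N <= n)%N -> l - eps <= u n.
Proof.
move=> cvu eps_gt0; have : l - eps < l by rewrite gtrBl.
by case/(cvgr_ge _ cvu) => N _ HN; exists N.
Qed.

Lemma cvg_mull (u : nat -> R) (c l : R) :
  u @ \oo --> l -> (fun n => c * u n) @ \oo --> c * l.
Proof. by move=> cvu; apply: cvgM => //; exact: cvg_cst. Qed.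

Lemma cvg_shiftS_eq (u v : nat -> R) (l : R) :
  (forall n, u n.+1 = v n) -> v @ \oo --> l -> u @ \oo --> l.
Proof.
move=> uv cvv; rewrite -cvg_shiftS.
by apply: cvg_trans cvv; apply: near_eq_cvg; apply: nearW => n /=; rewrite uv.
Qed.

Lemma psumD_tail x K n : (K <= n)%N ->
  psum x n = psum x K + \sum_(K.+1 <= i < n.+1) x i.
Proof. by move=> Kn; rewrite /psum -!(big_mkord xpredT) (@big_cat_nat _ _ _ K.+1). Qed.

(* Summation by parts: with [W l = w 0 + ... + w (l - 1)],
   [sum_i w i * (p (i+1) + p (i+2) + ...) = sum_l W l * p l]. *)
Lemma cvg_psum_mul_tail (p w : nat -> R) (s mu : R) :
  (forall i, 0 <= p i) -> (forall i, 0 <= w i) ->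
  psum p @ \oo --> s ->
  psum (fun l => (\sum_(i < l) w i) * p l) @ \oo --> mu ->
  psum (fun i => w i * (s - psum p i)) @ \oo --> mu.
Proof.
move=> p_ge0 w_ge0 cvp cvq.
set W := fun l => \sum_(i < l) w i.
set q := fun l => W l * p l.
have WS l : W l.+1 = W l + w l by rewrite /W big_ord_recr.
have W_ge0 n : 0 <= W n by rewrite /W sumr_ge0.
have W_le n k : W n <= W (n + k)%N.
  elim: k => [|k IH]; first by rewrite addn0.
  by rewrite addnS WS (le_trans IH) // lerDl.
have q_ge0 i : 0 <= q i by rewrite /q mulr_ge0.
have by_parts n : psum (fun i => w i * (s - psum p i)) n =
                  psum q n + W n.+1 * (s - psum p n).
  elim: n => [|n IH]; first by rewrite !psum0 /q /W big_ord1 big_ord0 mul0r add0r.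
  by rewrite /q !psumS IH !WS; ring.
have rem_ge0 n : 0 <= W n.+1 * (s - psum p n).
  by rewrite mulr_ge0 // subr_ge0 psum_le_lim.
have rem_le n : W n.+1 * (s - psum p n) <= mu - psum q n.
  have rem_le_k k :
      W n.+1 * (psum p (n + k)%N - psum p n) <= psum q (n + k)%N - psum q n.
    elim: k => [|k IH]; first by rewrite addn0 !subrr mulr0.
    rewrite addnS !psumS.
    have : W n.+1 * p (n + k)%N.+1 <= q (n + k)%N.+1.
      by rewrite /q ler_wpM2r //; have := W_le n.+1 k; rewrite addSn.
    lra.
  have cv_lhs : (fun k => W n.+1 * (psum p (n + k)%N - psum p n)) @ \oo -->
                W n.+1 * (s - psum p n).
    apply: cvgM; first exact: cvg_cst.
    by apply: cvgB; [exact: cvg_psum_shift | exact: cvg_cst].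
  have cv_rhs : (fun k => psum q (n + k)%N - psum q n) @ \oo --> mu - psum q n.
    by apply: cvgB; [exact: cvg_psum_shift | exact: cvg_cst].
  by apply: (ler_cvg_to cv_lhs cv_rhs); exact: nearW.
apply: (@squeeze_cvgr _ _ _ _ (psum q) (fun _ => mu)) => //; last exact: cvg_cst.
apply: nearW => n; rewrite by_parts; apply/andP; split; first by rewrite lerDl.
by have := rem_le n; lra.
Qed.

Lemma cvg_psum_tail (p : nat -> R) (s mu : R) : (forall i, 0 <= p i) ->
  psum p @ \oo --> s -> psum (fun l => l%:R * p l) @ \oo --> mu ->
  psum (fun i => s - psum p i) @ \oo --> mu.
Proof.
move=> p_ge0 cvp cvq.
have /= := cvg_psum_mul_tail (w := fun=> 1) (mu := mu) p_ge0 (fun=> ler01) cvp.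
have -> : (fun l => (\sum_(i < l) (1 : R)) * p l) = (fun l => l%:R * p l).
  by apply/funext => l; rewrite sumr_const card_ord.
have -> : (fun i => 1 * (s - psum p i)) = (fun i => s - psum p i).
  by apply/funext => i; rewrite mul1r.
exact.
Qed.

Lemma cvg_incr_shift (e : nat -> R) (l : R) j : incr e @ \oo --> l ->
  (fun L => e (L - j)%N - e (L - j - 1)%N) @ \oo --> l.
Proof.
move=> cv; rewrite -(cvg_shiftn j); apply: cvg_trans cv; apply: near_eq_cvg; near=> n.
have n_ge1 : (1 <= n)%N by near: n; exists 1%N.
by rewrite /= addnK /incr -[in LHS](prednK n_ge1) /= prednK // subn1.
Unshelve. all: by end_near. Qed.

End PartialSums.

Definition approx_renewal (R : realType) (a x : nat -> R) : Prop :=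
  forall dl, 0 < dl -> exists K N, [/\ (1 <= K)%N, 1 - dl <= psum a K &
    forall k, (N <= k)%N -> `|x k - \sum_(i < K.+1) a i * x (k - i)%N| <= dl].

Section LimsupRuns.
Variables (R : realType) (a x : nat -> R) (B : R).
Hypotheses (a_ge0 : forall i, 0 <= a i) (psum_a_le1 : forall K, psum a K <= 1)
  (a1_gt0 : 0 < a 1%N) (x_ge0 : forall n, 0 <= x n) (x_le : forall n, x n <= B)
  (x_approx : approx_renewal a x).

Let U := [set y : R | exists N, forall n, (N <= n)%N -> x n <= y].
Let s := inf U.

Let U_neq0 : U !=set0.
Proof. by exists B; exists 0%N => n _; exact: x_le. Qed.

Let U_lb0 : lbound U 0.
Proof. by move=> y [N hN]; exact: le_trans (x_ge0 N) (hN N (leqnn N)). Qed.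

Let limsup_ge0 : 0 <= s.
Proof. exact: lb_le_inf U_neq0 U_lb0. Qed.

Let eventually_le_limsup (eps : R) : 0 < eps ->
  exists N, forall n, (N <= n)%N -> x n <= s + eps.
Proof.
move=> eps_gt0; have : inf U < s + eps by rewrite ltrDl.
case/(inf_lt U_neq0) => y [N hN] ys.
by exists N => n Nn; exact: le_trans (hN n Nn) (ltW ys).
Qed.

Let frequently_ge_limsup (dl : R) : 0 < dl ->
  forall N, exists n, (N <= n)%N /\ s - dl <= x n.
Proof.
move=> dl_gt0 N; apply/not_existsP => hn.
have : U (s - dl).
  exists N => n Nn; rewrite leNgt; apply/negP => /ltW xn.
  by apply: (hn n); split.
by move=> /(ge_inf (ex_intro _ 0 U_lb0)); rewrite -/s; lra.
Qed.

Let c := 1 + 3 / a 1%N.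

(* Near the limsup, [x k ~ sum_i a i * x (k - i)] with [x (k - i) <= s + dl]
   leaves no room for [x (k - 1)] to be far below [s], because [a 1 > 0]. *)
Let limsup_step_back (dl : R) : 0 < dl -> exists N0, forall k, (N0 <= k)%N ->
  s - dl <= x k -> s - c * dl <= x (k - 1)%N.
Proof.
move=> dl_gt0.
have [[|K] [N1 [// _ _ approx_k]]] := x_approx dl_gt0.
have [N2 le_N2] := eventually_le_limsup dl_gt0.
exists (N1 + N2 + K.+2)%N => k Nk xk.
have := approx_k k ltac:(lia).
have split2 (f : nat -> R) : \sum_(i < K.+2) f i = f 0%N + f 1%N + \sum_(i < K) f i.+2.
  by rewrite !big_ord_recl /= addrA.
rewrite (split2 (fun i => a i * x (k - i)%N)) subn0 => approx.
have rest : a 0%N * x k + \sum_(i < K) a i.+2 * x (k - i.+2)%N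
    <= (a 0%N + \sum_(i < K) a i.+2) * (s + dl).
  rewrite mulrDl big_distrl /=; apply: lerD.
    by apply: ler_wpM2l => //; apply: le_N2; lia.
  apply: ler_sum => i _; apply: ler_wpM2l => //; apply: le_N2.
  have := ltn_ord i; lia.
have rest_mass : a 0%N + \sum_(i < K) a i.+2 <= 1 - a 1%N.
  by have := psum_a_le1 K.+1; rewrite /psum split2; lra.
have up : a 0%N * x k + \sum_(i < K) a i.+2 * x (k - i.+2)%N <= (1 - a 1%N) * (s + dl).
  by apply: (le_trans rest); apply: ler_wpM2r => //; have := limsup_ge0; lra.
move: approx; rewrite ler_norml => /andP [_ approx].
have -> : s - c * dl = (a 1%N * s - a 1%N * dl - 3 * dl) / a 1%N.
  by rewrite /c; field; exact: lt0r_neq0.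
rewrite ler_pdivrMr // [X in _ <= X]mulrC.
rewrite mulrBl mul1r mulrDr in up.
have := mulr_ge0 (ltW a1_gt0) (ltW dl_gt0); lra.
Qed.

Let limsup_runs J (eps : R) : 0 < eps -> forall N, exists n, (N <= n)%N /\
  forall j, (j <= J)%N -> s - eps <= x (n - j)%N.
Proof.
elim: J eps => [|J IH] eps eps_gt0 N.
  have [n [Nn hn]] := frequently_ge_limsup eps_gt0 N.
  by exists n; split => // j; rewrite leqn0 => /eqP ->; rewrite subn0.
have c_gt0 : 0 < c by rewrite ltr_pwDl // divr_ge0 // ltW.
pose dl := eps / c.
have dl_gt0 : 0 < dl by rewrite divr_gt0.
have dl_le : dl <= eps by rewrite ler_pdivrMr // ler_peMr ?ltW // /c ltrDl divr_gt0.
have c_dl : c * dl = eps by rewrite /dl mulrC divfK // lt0r_neq0.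
have [N0 step] := limsup_step_back dl_gt0.
have [n [Nn run]] := IH dl dl_gt0 (N + N0 + J)%N.
exists n; split; first lia.
move=> j; rewrite leq_eqVlt => /orP [/eqP -> | jJ].
  have := step (n - J)%N ltac:(lia) (run J (leqnn J)).
  by rewrite c_dl (_ : (n - J - 1 = n - J.+1)%N) //; lia.
by apply: le_trans (run j _); [lra | lia].
Qed.

Lemma approx_renewal_limsup_runs : exists s : R,
  (forall eps, 0 < eps -> exists N, forall n, (N <= n)%N -> x n <= s + eps) /\
  (forall eps, 0 < eps -> forall J N, exists n, (N <= n)%N /\
     forall j, (j <= J)%N -> s - eps <= x (n - j)%N).
Proof.
by exists s; split; [exact: eventually_le_limsup | move=> eps ? J; exact: limsup_runs].
Qed.

End LimsupRuns.

Lemma approx_renewal_reflect (R : realType) (a x : nat -> R) (M : R) :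
  0 <= M -> (forall K, psum a K <= 1) -> approx_renewal a x ->
  approx_renewal a (fun n => M - x n).
Proof.
move=> M_ge0 psum_a_le1 x_approx dl dl_gt0.
have M1_gt0 : 0 < M + 1 by rewrite ltr_wpDl.
have [K [N [K_ge1 aK approx_k]]] := x_approx _ (divr_gt0 dl_gt0 M1_gt0).
have dlM : dl / (M + 1) * (M + 1) = dl by rewrite divfK // gt_eqF.
have dl'_ge0 : 0 <= M * (dl / (M + 1)) by rewrite mulr_ge0 // divr_ge0 // ltW.
exists K, N; split => //; first by move: dlM; rewrite mulrDr mulr1; lra.
move=> k Nk.
have -> : M - x k - \sum_(i < K.+1) a i * (M - x (k - i)%N) =
    - (x k - \sum_(i < K.+1) a i * x (k - i)%N) + M * (1 - psum a K).
  have -> : \sum_(i < K.+1) a i * (M - x (k - i)%N) =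
      M * psum a K - \sum_(i < K.+1) a i * x (k - i)%N.
    by rewrite /psum big_distrr -sumrB; apply: eq_bigr => i _ /=; ring.
  ring.
apply: le_trans (ler_normD _ _) _.
rewrite normrN [`|M * _|]ger0_norm ?mulr_ge0 ?subr_ge0 //.
have := approx_k k Nk; have : M * (1 - psum a K) <= M * (dl / (M + 1)).
  by rewrite ler_wpM2l //; lra.
by move: dlM; rewrite mulrDr mulr1; lra.
Qed.

Section Renewal.
Variables (R : realType) (r d : nat -> R) (m : R).
Hypotheses (r_ge0 : forall i, 0 <= r i) (r0_gt0 : 0 < r 0%N)
  (cvg_r : psum r @ \oo --> (1 : R))
  (cvg_tail : psum (tail r) @ \oo --> (1 : R))
  (cvg_tail2 : psum (tail (tail r)) @ \oo --> m)
  (d_renewal : forall n, seqconv (fun i => kdelta i - tail r i) d n = r n).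

Let a := tail r.
Let T := tail a.
Let M := (r 0%N)^-1.

Let M_gt0 : 0 < M. Proof. by rewrite invr_gt0. Qed.
Let psum_r_le1 n : psum r n <= 1. Proof. exact: psum_le_lim. Qed.
Let a_ge0 : forall i, 0 <= a i. Proof. exact: tail_ge0. Qed.
Let psum_a_le1 n : psum a n <= 1. Proof. exact: psum_le_lim. Qed.
Let T_ge0 : forall i, 0 <= T i. Proof. exact: tail_ge0. Qed.
Let psum_T_le n : psum T n <= m. Proof. exact: psum_le_lim. Qed.

Let a0 : a 0%N = 1 - r 0%N. Proof. by rewrite /a /tail psum0. Qed.
Let T0 : T 0%N = r 0%N. Proof. by rewrite /T /tail psum0 a0 opprB addrC subrK. Qed.

(* If [a 1 = 0], then [r] is carried by [{0, 1}] and [sum a = a 0 = 1 - r 0 < 1]. *)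
Let a1_gt0 : 0 < a 1%N.
Proof.
rewrite lt_def a_ge0 andbT; apply/eqP => a1_eq0.
have aS0 n : a n.+1 = 0.
  elim: n => // n IH; apply/le_anti; rewrite a_ge0 andbT -IH /a tailS.
  by rewrite lerBlDr lerDl.
have psum_a n : psum a n = 1 - r 0%N.
  by elim: n => [|n IH]; rewrite ?psum0 ?a0 // psumS IH aS0 addr0.
have : 1 <= 1 - r 0%N.
  apply: (ler_cvg_to cvg_tail (cvg_cst _)).
  by apply: nearW => n; rewrite psum_a.
by have := r0_gt0; lra.
Qed.

Let d_eq n : d n = r n + seqconv a d n.
Proof. by rewrite -d_renewal seqconvBl seqconv_kdelta subrK. Qed.

Let seqconv_T_d n : seqconv T d n = psum r n.
Proof. by rewrite seqconv_tail; apply: eq_bigr => i _; rewrite d_renewal. Qed.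

Let d_ge0 n : 0 <= d n.
Proof.
elim/ltn_ind: n => n IH.
have := d_eq n; rewrite /seqconv big_ord_recl subn0 a0 mulrBl mul1r => e.
have : 0 <= r 0%N * d n.
  have -> : r 0%N * d n = r n + \sum_(i < n) a (bump 0 i) * d (n - bump 0 i)%N by lra.
  apply: addr_ge0 => //; apply: sumr_ge0 => i _; rewrite mulr_ge0 // IH //.
  by rewrite /bump /=; have := ltn_ord i; lia.
by rewrite pmulr_rge0.
Qed.

Let d_le n : d n <= M.
Proof.
rewrite -(ler_pM2l r0_gt0) /M mulfV ?gt_eqF //.
have := seqconv_T_d n; rewrite /seqconv big_ord_recl subn0 T0 => e.
have : 0 <= \sum_(i < n) T (bump 0 i) * d (n - bump 0 i)%N.
  by apply: sumr_ge0 => i _; rewrite mulr_ge0.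
by have := psum_r_le1 n; lra.
Qed.

Let tail_conv_bound x J n : (forall i, 0 <= x i) -> (J <= n)%N ->
  0 <= \sum_(J.+1 <= i < n.+1) x i * d (n - i)%N <= M * (psum x n - psum x J).
Proof.
move=> x_ge0 Jn; rewrite sumr_ge0 => [|i _]; last by rewrite mulr_ge0.
rewrite (psumD_tail x Jn) addrAC subrr add0r big_distrr /=.
by apply: ler_sum => i _; rewrite mulrC ler_wpM2r.
Qed.

Let seqconv_split x J n : (J <= n)%N -> seqconv x d n =
  \sum_(i < J.+1) x i * d (n - i)%N + \sum_(J.+1 <= i < n.+1) x i * d (n - i)%N.
Proof.
move=> Jn; rewrite /seqconv -!(big_mkord xpredT (fun i => x i * d (n - i)%N)).
by rewrite (@big_cat_nat _ _ _ J.+1).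
Qed.

Let d_approx : approx_renewal a d.
Proof.
move=> dl dl_gt0.
pose eta := dl / (2 * (M + 1)).
have eta_gt0 : 0 < eta by rewrite divr_gt0 // mulr_gt0 // ltr_wpDl // ltW.
have etaM : (M + 1) * eta = dl / 2.
  by rewrite /eta; field; rewrite gt_eqF // ltr_wpDl // ltW.
have [K0 aK0] := cvg_eventually_ge cvg_tail eta_gt0.
have [N0 rN0] := cvg_eventually_ge cvg_r (divr_gt0 dl_gt0 (ltr0Sn _ 1)).
have Meta_ge0 : 0 <= M * eta by rewrite mulr_ge0 // ltW.
have aK := aK0 K0.+1 (leqnSn _).
move: etaM; rewrite mulrDl mul1r => etaM.
exists K0.+1, (K0.+1 + N0).+1; split => //; first lra.
move=> k Nk; have Kk : (K0.+1 <= k)%N by lia.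
have rk : r k <= dl / 2.
  have := rN0 k.-1 ltac:(lia); have := psum_r_le1 k.
  by rewrite -(prednK (leq_ltn_trans (leq0n _) Nk)) psumS; lra.
have /andP [tl_ge0 tl_le] := tail_conv_bound a_ge0 Kk.
have tl_small : \sum_(K0.+2 <= i < k.+1) a i * d (k - i)%N <= M * eta.
  apply: le_trans tl_le _; rewrite ler_wpM2l ?(ltW M_gt0) //.
  by have := psum_a_le1 k; lra.
rewrite d_eq (seqconv_split a Kk) ler_norml; apply/andP; split; last lra.
by have := r_ge0 k; lra.
Qed.

Let limsup_mul_le (s : R) :
  (forall eps, 0 < eps -> forall J N, exists n, (N <= n)%N /\
     forall j, (j <= J)%N -> s - eps <= d (n - j)%N) ->
  s * m <= 1.
Proof.
move=> runs.
suff psum_bound J : s * psum T J <= 1.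
  by apply: (ler_cvg_to (cvgM (cvg_cst s) cvg_tail2) (cvg_cst _)); exact: nearW.
apply/ler_addgt0Pr => eps eps_gt0.
have P_ge0 : 0 <= psum T J by rewrite sumr_ge0.
pose eps' := eps / (psum T J + 1).
have eps'_gt0 : 0 < eps' by rewrite divr_gt0 // ltr_wpDl.
have eps'P : eps' * psum T J <= eps.
  have : eps' * (psum T J + 1) = eps by rewrite /eps' divfK // gt_eqF // ltr_wpDl.
  by rewrite mulrDr mulr1; have := ltW eps'_gt0; lra.
have [n [Jn run]] := runs eps' eps'_gt0 J J.
have head_ge : (s - eps') * psum T J <= \sum_(i < J.+1) T i * d (n - i)%N.
  rewrite /psum mulrC big_distrl /=; apply: ler_sum => i _.
  by rewrite ler_wpM2l // run // -ltnS ltn_ord.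
have := tail_conv_bound T_ge0 Jn => /andP [tl_ge0 _].
have := psum_r_le1 n; rewrite -seqconv_T_d (seqconv_split T Jn).
by move: head_ge; rewrite mulrBl; lra.
Qed.

Let liminf_mul_ge (s : R) :
  (forall eps, 0 < eps -> forall J N, exists n, (N <= n)%N /\
     forall j, (j <= J)%N -> d (n - j)%N <= s + eps) ->
  1 <= s * m.
Proof.
move=> runs.
have m_ge0 : 0 <= m by apply: le_trans (psum_T_le 0); rewrite sumr_ge0.
suff near_bound eps : 0 < eps -> 1 - eps <= (s + eps) * m.
  apply/ler_addgt0Pr => eps eps_gt0.
  have m1_gt0 : 0 < m + 1 by rewrite ltr_wpDl.
  have := near_bound _ (divr_gt0 eps_gt0 m1_gt0).
  have : eps / (m + 1) * (m + 1) = eps by rewrite divfK // gt_eqF.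
  by rewrite mulrDr mulr1 mulrDl mulrC; lra.
move=> eps_gt0.
suff psum_bound J : 1 - eps <= (s + eps) * psum T J + M * (m - psum T J).
  have cv : (fun J => (s + eps) * psum T J + M * (m - psum T J)) @ \oo -->
            (s + eps) * m + M * (m - m).
    apply: cvgD; apply: cvgM; [exact: cvg_cst | exact: cvg_tail2 | exact: cvg_cst |].
    by apply: cvgB; [exact: cvg_cst | exact: cvg_tail2].
  rewrite -[X in _ <= X]addr0 -(mulr0 M) -(subrr m).
  by apply: (ler_cvg_to (cvg_cst _) cv); exact: nearW.
have [N1 rN1] := cvg_eventually_ge cvg_r eps_gt0.
have [n [Nn run]] := runs eps eps_gt0 J (N1 + J)%N.
have Jn : (J <= n)%N by lia.
have head_le : \sum_(i < J.+1) T i * d (n - i)%N <= (s + eps) * psum T J.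
  rewrite /psum mulrC big_distrl /=; apply: ler_sum => i _.
  by rewrite ler_wpM2l // run // -ltnS ltn_ord.
have := tail_conv_bound T_ge0 Jn => /andP [_ tl_le].
have := ler_wpM2l (ltW M_gt0) (psum_T_le n).
have := rN1 n ltac:(lia); rewrite -seqconv_T_d (seqconv_split T Jn).
lra.
Qed.

Theorem renewal_theorem : d @ \oo --> m^-1.
Proof.
have [s [ev_le runs]] := approx_renewal_limsup_runs a_ge0 psum_a_le1 a1_gt0
  d_ge0 d_le d_approx.
have Md_ge0 n : 0 <= M - d n by rewrite subr_ge0.
have Md_le n : M - d n <= M by rewrite gerBl.
have [s' [ev_le' runs']] := approx_renewal_limsup_runs a_ge0 psum_a_le1 a1_gt0
  Md_ge0 Md_le (approx_renewal_reflect (ltW M_gt0) psum_a_le1 d_approx).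
have m_gt0 : 0 < m.
  by apply: lt_le_trans (psum_T_le 0); rewrite psum0 T0.
have s_le : s <= m^-1 by rewrite -[m^-1]mul1r ler_pdivlMr // limsup_mul_le.
have s'_ge : m^-1 <= M - s'.
  rewrite -[m^-1]mul1r ler_pdivrMr // liminf_mul_ge // => eps eps_gt0 J N.
  have [n [Nn run]] := runs' eps eps_gt0 J N.
  by exists n; split => // j jJ; have := run j jJ; lra.
apply/cvgrPdist_le => eps eps_gt0.
have [N1 le1] := ev_le eps eps_gt0.
have [N2 le2] := ev_le' eps eps_gt0.
near=> n; have := le1 n; have := le2 n.
rewrite ler_norml; move=> /(_ ltac:(near: n; exists N2 => //)) h2.
move=> /(_ ltac:(near: n; exists N1 => //)) h1.
by apply/andP; split; lra.
Unshelve. all: by end_near. Qed.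

End Renewal.

Section PoissonWeights.
Variable R : realType.
Implicit Types y : R.

Definition poisson y (l : nat) : R := expR (- y) * y ^+ l / (l`!)%:R.

Lemma expRNK y : expR (- y) * expR y = 1.
Proof. by rewrite expRN mulVf // gt_eqF // expR_gt0. Qed.

Lemma poisson_ge0 y l : 0 <= y -> 0 <= poisson y l.
Proof. by move=> y_ge0; rewrite /poisson divr_ge0 ?mulr_ge0 ?expR_ge0 ?exprn_ge0. Qed.

Lemma poisson_le1 y l : 0 <= y -> poisson y l <= 1.
Proof.
move=> y_ge0; rewrite /poisson -mulrA -[leRHS](expRNK y) ler_wpM2l ?expR_ge0 //.
case: l => [|n]; last by apply: le_trans (expR_ge1Dxn n y_ge0); rewrite lerDr.
by rewrite expr0 fact0 divr1 (le_trans _ (expR_ge1Dx y)) // lerDl.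
Qed.

Lemma series_exp_coeffS y n :
  series (exp_coeff y) n.+1 = series (exp_coeff y) n + y ^+ n / (n`!)%:R.
Proof. by rewrite /series /= big_nat_recr. Qed.

Lemma psum_poisson y n : psum (poisson y) n = expR (- y) * series (exp_coeff y) n.+1.
Proof.
rewrite /psum /series /= big_mkord big_distrr; apply: eq_bigr => i _.
by rewrite /poisson /exp_coeff /= mulrA.
Qed.

Lemma psum_poisson_mean y n :
  psum (fun l => l%:R * poisson y l) n.+1 = y * expR (- y) * series (exp_coeff y) n.+1.
Proof.
elim: n => [|n IH].
  rewrite psumS psum0 /series /= big_nat1 /exp_coeff /poisson /=.
  by rewrite factS !fact0 muln1 expr0 expr1 mul0r add0r !divr1; ring.
rewrite psumS IH [in RHS]series_exp_coeffS /poisson !factS !natrM !exprS.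
by field; rewrite pnatr_eq0 -lt0n fact_gt0 nat1r -natrD !pnatr_eq0.
Qed.

Lemma sum_nat_mul2 l : (\sum_(i < l) (i%:R : R)) * 2 = l%:R * (l%:R - 1).
Proof.
elim: l => [|l IH]; first by rewrite big_ord0 !mul0r.
by rewrite big_ord_recr /= mulrDl IH -natr1; ring.
Qed.

Lemma psum_poisson_pairs y n :
  psum (fun l => (\sum_(i < l) (i%:R : R)) * poisson y l) n.+1 =
  y ^+ 2 / 2 * expR (- y) * series (exp_coeff y) n.
Proof.
elim: n => [|n IH].
  by rewrite psumS psum0 /series /= big_geq // !big_ord0 big_ord1 !mul0r mulr0 add0r.
rewrite psumS IH [in RHS]series_exp_coeffS.
have -> : \sum_(i < n.+2) (i%:R : R) = n.+2%:R * n.+1%:R / 2.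
  by rewrite -[n.+1%:R](addrK 1) natr1 -sum_nat_mul2 mulfK.
rewrite /poisson !factS !natrM !exprS.
by field; rewrite pnatr_eq0 -lt0n fact_gt0 nat1r -natrD !pnatr_eq0.
Qed.

Lemma cvg_series_exp_coeff y : series (exp_coeff y) @ \oo --> expR y.
Proof. exact: is_cvg_series_exp_coeff. Qed.

Lemma cvg_series_exp_coeffS y : (fun n => series (exp_coeff y) n.+1) @ \oo --> expR y.
Proof.
rewrite -[X in X @ \oo --> _]/[sequence _ n.+1]_n cvg_shiftS.
exact: cvg_series_exp_coeff.
Qed.

Lemma cvg_psum_poisson y : psum (poisson y) @ \oo --> (1 : R).
Proof.
have cv := cvg_mull (c := expR (- y)) (cvg_series_exp_coeffS (y := y)).
rewrite expRNK in cv.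
by rewrite (funext (psum_poisson y)); exact: cv.
Qed.

Lemma cvg_psum_poisson_mean y : psum (fun l => l%:R * poisson y l) @ \oo --> y.
Proof.
have cv := cvg_mull (c := y * expR (- y)) (cvg_series_exp_coeffS (y := y)).
rewrite -mulrA expRNK mulr1 in cv.
exact: cvg_shiftS_eq (psum_poisson_mean y) cv.
Qed.

Lemma cvg_psum_poisson_pairs y :
  psum (fun l => (\sum_(i < l) (i%:R : R)) * poisson y l) @ \oo --> y ^+ 2 / 2.
Proof.
have cv := cvg_mull (c := y ^+ 2 / 2 * expR (- y)) (cvg_series_exp_coeff (y := y)).
rewrite -(mulrA (y ^+ 2 / 2)) expRNK mulr1 in cv.
exact: cvg_shiftS_eq (psum_poisson_pairs y) cv.
Qed.

End PoissonWeights.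

Section PoissonMixture.
Variables (R : realType) (P : probability R R) (lam : R).
Hypotheses (P_nonneg : P [set x : R | 0 <= x] = 1%E) (lam_gt0 : 0 < lam).

Let D := [set x : R | 0 <= x].

Let measurable_D : measurable D.
Proof.
have -> : D = `[0, +oo[%classic.
  by apply/seteqP; split => x /=; rewrite in_itv /= andbT.
exact: measurable_itv.
Qed.

Let poisson_scaled_ge0 l x : D x -> 0 <= poisson (lam * x) l.
Proof. by move=> x_ge0; rewrite poisson_ge0 // mulr_ge0 // ltW. Qed.

Let measurable_poisson_scaled l : measurable_fun setT (fun x : R => poisson (lam * x) l).
Proof.
have mlin : measurable_fun setT (fun x : R => lam * x).
  by apply: measurable_funM => //; exact: measurable_cst.
apply: measurable_funM; last exact: measurable_cst.
apply: measurable_funM; last exact: measurable_funX.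
by apply: measurableT_comp; [exact: measurable_expR | exact: measurable_funN].
Qed.

Let integral_restrict (f : R -> R) : measurable_fun setT f ->
  (\int[P]_x (f x)%:E = \int[P]_(x in D) (f x)%:E)%E.
Proof.
move=> mf; rewrite [RHS]integral_mkcond; apply: ae_eq_integral => //.
- exact/measurable_EFinP.
- apply/(measurable_restrictT _ measurable_D).
  by apply/measurable_EFinP; apply: measurable_funTS.
- exists (~` D); split; first exact: measurableC.
    by have := probability_setC P measurable_D; rewrite P_nonneg subee.
  by move=> x /= hx Dx; apply: hx => _; rewrite patchE ifT //; exact/mem_set.
Qed.

Let integral_poisson_scaled_fin l :
  (\int[P]_(x in D) (poisson (lam * x) l)%:E)%E \is a fin_num.
Proof.
rewrite ge0_fin_numE; last first.
  by apply: integral_ge0 => x Dx; rewrite lee_fin poisson_scaled_ge0.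
apply: (@le_lt_trans _ _ (\int[P]_(x in D) (cst 1%E) x)%E).
  apply: ge0_le_integral => //.
  - by move=> x Dx; rewrite lee_fin poisson_scaled_ge0.
  - exact/measurable_EFinP/measurable_funTS.
  - by move=> x Dx; rewrite /= lee_fin poisson_le1 // mulr_ge0 // ltW.
rewrite integral_cst // mul1e.
by apply: le_lt_trans (probability_le1 P measurable_D) _; rewrite ltry.
Qed.

Let r_coefE l : r_coef P lam l = fine (\int[P]_(x in D) (poisson (lam * x) l)%:E)%E.
Proof. by rewrite /r_coef (integral_restrict (measurable_poisson_scaled l)). Qed.

Lemma r_coef_ge0 l : 0 <= r_coef P lam l.
Proof.
rewrite r_coefE fine_ge0 //.
by apply: integral_ge0 => x Dx; rewrite lee_fin poisson_scaled_ge0.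
Qed.

Let integral_psum_poisson (c : nat -> R) n : (forall l, 0 <= c l) ->
  (\int[P]_(x in D) (psum (fun l => c l * poisson (lam * x) l) n)%:E)%E =
  (psum (fun l => c l * r_coef P lam l) n)%:E.
Proof.
move=> c_ge0; rewrite /psum -sumEFin.
under eq_integral do rewrite -sumEFin.
rewrite ge0_integral_sum //; last first.
- by move=> l x Dx; rewrite lee_fin mulr_ge0 ?poisson_scaled_ge0.
- move=> l; apply/measurable_EFinP; apply: measurable_funM => //.
  exact: measurable_funTS.
apply: eq_bigr => l _; under eq_integral do rewrite EFinM.
rewrite ge0_integralZl_EFin //; first last.
- exact/measurable_EFinP/measurable_funTS.
- by move=> x Dx; rewrite lee_fin poisson_scaled_ge0.
by rewrite r_coefE EFinM fineK ?integral_poisson_scaled_fin.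
Qed.

(* Monotone convergence exchanges the sum over [l] with the integral defining [r_coef]. *)
Lemma cvg_psum_r_coef (c : nat -> R) (h : R -> R) :
  (forall l, 0 <= c l) ->
  (forall x, D x -> psum (fun l => c l * poisson (lam * x) l) n @[n --> \oo] --> h x) ->
  (\int[P]_(x in D) (h x)%:E < +oo)%E ->
  psum (fun l => c l * r_coef P lam l) @ \oo --> fine (\int[P]_(x in D) (h x)%:E)%E.
Proof.
move=> c_ge0 cvh h_fin.
pose S n x := psum (fun l => c l * poisson (lam * x) l) n.
have S_ge0 n x : D x -> 0 <= S n x.
  by move=> Dx; apply: sumr_ge0 => l _; rewrite mulr_ge0 ?poisson_scaled_ge0.
have S_mono x : D x -> {homo (fun n => (S n x)%:E) : n m / (n <= m)%N >-> (n <= m)%E}.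
  move=> Dx n m nm; rewrite lee_fin -(subnKC nm) le_psum_addn // => l.
  by rewrite mulr_ge0 ?poisson_scaled_ge0.
have S_meas n : measurable_fun D (fun x => (S n x)%:E).
  apply/measurable_EFinP; apply: measurable_sum => l.
  by apply: measurable_funM => //; exact: measurable_funTS.
have h_ge0 x : D x -> 0 <= h x.
  move=> Dx; apply: (ler_cvg_to (cvg_cst 0) (cvh x Dx)).
  by apply: nearW => n; exact: S_ge0.
have lim_S : (\int[P]_(x in D)
      (fun x0 => limn ((fun n x => (S n x)%:E) ^~ x0)) x)%E =
    (\int[P]_(x in D) (h x)%:E)%E.
  apply: eq_integral => x /set_mem Dx; apply: cvg_lim => //.
  by apply/fine_cvgP; split; [exact: nearW | exact: cvh].
have := cvg_monotone_convergence (mu := P) measurable_D S_meas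
  (fun n x Dx => S_ge0 n x Dx) S_mono.
have int_h_fin : (\int[P]_(x in D) (h x)%:E)%E \is a fin_num.
  by rewrite ge0_fin_numE //; apply: integral_ge0 => x Dx; rewrite lee_fin h_ge0.
rewrite lim_S -{1}(fineK int_h_fin) => /fine_cvg.
apply: cvg_trans; apply: near_eq_cvg; apply: nearW => n /=.
by rewrite integral_psum_poisson.
Qed.

Lemma cvg_psum_r_coef_total : psum (r_coef P lam) @ \oo --> (1 : R).
Proof.
have int1 : (\int[P]_(x in D) (1 : R)%:E)%E = 1%E by rewrite integral_cst // mul1e.
have cv x : D x -> psum (fun l => 1 * poisson (lam * x) l) @ \oo --> (1 : R).
  move=> _; have -> : psum (fun l => 1 * poisson (lam * x) l) = psum (poisson (lam * x)).
    by apply/funext => n; apply: eq_bigr => l _; rewrite mul1r.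
  exact: cvg_psum_poisson.
have := cvg_psum_r_coef (fun=> ler01) cv; rewrite int1 /= => /(_ (ltry _)).
have -> // : psum (fun l => 1 * r_coef P lam l) = psum (r_coef P lam).
by apply/funext => n; apply: eq_bigr => l _; rewrite mul1r.
Qed.

Lemma cvg_psum_r_coef_mean : rho1 P lam = 1%E ->
  psum (fun l => l%:R * r_coef P lam l) @ \oo --> (1 : R).
Proof.
move=> rho1_eq1.
have int_lin : (\int[P]_(x in D) (lam * x)%:E)%E = 1%E.
  under eq_integral do rewrite EFinM.
  rewrite ge0_integralZl_EFin //; try by [exact: ltW | exact: EFin_measurable].
  by rewrite -rho1_eq1 /rho1 (@integral_restrict id) //; exact: measurable_id.
have cv x : D x -> psum (fun l => l%:R * poisson (lam * x) l) @ \oo --> lam * x.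
  by move=> _; exact: cvg_psum_poisson_mean.
by have := cvg_psum_r_coef (fun l => ler0n _ l) cv; rewrite int_lin /=; apply; exact: ltry.
Qed.

Lemma cvg_psum_r_coef_pairs : (rho12 P lam < +oo)%E ->
  psum (fun l => (\sum_(i < l) (i%:R : R)) * r_coef P lam l) @ \oo -->
  fine (rho12 P lam) / 2.
Proof.
move=> rho12_fin.
have sq_fin : (\int[P]_x (x ^+ 2)%:E)%E \is a fin_num.
  rewrite ge0_fin_numE; last by apply: integral_ge0 => x _; rewrite lee_fin sqr_ge0.
  rewrite ltNge leye_eq; apply/negP => /eqP sq_oo.
  by move: rho12_fin; rewrite /rho12 sq_oo gt0_muley ?lte_fin ?exprn_gt0 // ltxx.
set b := fine (\int[P]_x (x ^+ 2)%:E)%E.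
have int_sq_b : (\int[P]_x (x ^+ 2)%:E)%E = b%:E by rewrite /b fineK.
have int_sq : (\int[P]_(x in D) ((lam * x) ^+ 2 / 2)%:E)%E = ((lam ^+ 2 / 2) * b)%:E.
  have -> : (fun x => ((lam * x) ^+ 2 / 2)%:E) =
            (fun x => ((lam ^+ 2 / 2)%:E * (x ^+ 2)%:E)%E).
    by apply/funext => x; rewrite -EFinM exprMn; congr (_%:E); ring.
  rewrite ge0_integralZl_EFin //; try by [rewrite divr_ge0 // sqr_ge0 |
    move=> x Dx; rewrite lee_fin sqr_ge0 | apply/measurable_EFinP; exact: exprn_measurable].
  by rewrite -(integral_restrict (exprn_measurable _)) int_sq_b EFinM.
have cv x : D x ->
    psum (fun l => (\sum_(i < l) (i%:R : R)) * poisson (lam * x) l) @ \oo -->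
    (lam * x) ^+ 2 / 2.
  by move=> _; exact: cvg_psum_poisson_pairs.
have c_ge0 l : 0 <= \sum_(i < l) (i%:R : R) by apply: sumr_ge0 => i _; exact: ler0n.
have := cvg_psum_r_coef c_ge0 cv.
rewrite int_sq /rho12 int_sq_b -EFinM /=.
rewrite (_ : lam ^+ 2 / 2 * b = lam ^+ 2 * b / 2); last by ring.
by apply; exact: ltry.
Qed.

End PoissonMixture.

Theorem corollary1 (R : realType) (P : probability R R) (lam : R) (e : nat -> R) :
  P [set x : R | 0 <= x] = 1%E ->
  (0 < \int[P]_x x%:E < +oo)%E ->
  0 < lam ->
  rho1 P lam = 1%E ->
  (rho12 P lam < +oo)%E ->
  is_e_seq (r_coef P lam) e ->
  forall j : nat,
    (fun L : nat => e (L - j)%N - e (L - j - 1)%N) @ \oo --> 2 / fine (rho12 P lam).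
Proof.
move=> P_nonneg _ lam_gt0 rho1_eq1 rho12_fin e_seq j.
set r := r_coef P lam in e_seq *.
set m := fine (rho12 P lam) / 2.
have r_ge0 : forall l, 0 <= r l := r_coef_ge0 P_nonneg lam_gt0.
have r0_gt0 : 0 < r 0%N.
  rewrite lt_def r_ge0 andbT; apply/eqP => r0_eq0.
  case: e_seq => e0 /(_ 0%N); rewrite big_nat1 r0_eq0 mulr0 e0 => /eqP.
  by rewrite oner_eq0.
have cvg_r := cvg_psum_r_coef_total P_nonneg lam_gt0.
have cvg_tail : psum (tail r) @ \oo --> (1 : R).
  exact: cvg_psum_tail r_ge0 cvg_r (cvg_psum_r_coef_mean P_nonneg lam_gt0 rho1_eq1).
have cvg_tail_mean : psum (fun i => i%:R * tail r i) @ \oo --> m :=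
  cvg_psum_mul_tail r_ge0 (fun i => ler0n _ i) cvg_r
    (cvg_psum_r_coef_pairs P_nonneg lam_gt0 rho12_fin).
have cvg_tail2 : psum (tail (tail r)) @ \oo --> m.
  exact: cvg_psum_tail (tail_ge0 r_ge0 cvg_r) cvg_tail cvg_tail_mean.
rewrite (_ : 2 / _ = m^-1); last by rewrite /m invf_div.
apply: cvg_incr_shift.
exact: renewal_theorem r_ge0 r0_gt0 cvg_r cvg_tail cvg_tail2 (renewal_eq_incr e_seq).
Qed.
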